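(* (Consistency of DCC.) There is no label context $\Delta$, universe $U$ and DCC term $M$ such that $\Delta;\cdot\vdash M:(\Pi A{:}U.\,A)$.
   Context: DCC (Defunctionalized Calculus of Constructions): expressions $A,B,L,M,N::=x\mid U_i\mid\Pi x{:}A.B\mid L@M\mid\ell_i\{\overline M\}$, where $\ell_i$ ($i\in\mathbb N$) are label names disjoint from variables and $\overline M=M_1,\dots,M_n$ ($n\ge0$); universes are $U_i$. Type contexts $\Gamma::=\cdot\mid\Gamma,x{:}A$; label contexts $\Delta::=\cdot\mid\Delta,\ell_i(\{\overline x{:}\overline A\},x{:}A\mapsto M:B)$. Substitution standard with $\ell\{\overline M\}[N/x]=\ell\{\overline{M[N/x]}\}$; $[\overline M/\overline x]=[M_1/x_1,\dots,M_n/x_n]$. Reduction: $\Delta\vdash\ell\{\overline M\}@N\triangleright L[\overline M/\overline x,N/x]$ when $\ell(\{\overline x{:}\overline A\},x{:}A\mapsto L:B)\in\Delta$. Equivalence $\Delta\vdash M\equiv N$: common reduct; or $\Delta\vdash L\triangleright^*\ell\{\overline N\}$, $\Delta\vdash M\triangleright^*M'$, $\ell(\{\overline x{:}\overline A\},x{:}A\mapsto N:B)\in\Delta$, $\Delta\vdash N[\overline N/\overline x]\equiv M'@x$ give $\Delta\vdash L\equiv M$; or symmetrically. Typing and formation (mutual): variables from a well-formed context, $U_i:U_{i+1}$, $\Pi x{:}A.B:U_{\max(i,j)}$ when $A:U_i$ and $B:U_j$ under $x{:}A$, $M@N:B[N/x]$ when $M:\Pi x{:}A.B$ and $N:A$,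 conversion along $\equiv$ to a type $B:U_i$, and: if $\vdash\Delta;\Gamma$, $\ell(\{\overline x{:}\overline A\},x{:}A\mapsto M:B)\in\Delta$, $|\overline M|=|\overline x|$ and $\Delta;\Gamma\vdash M_k:A_k[M_1/x_1,\dots,M_{k-1}/x_{k-1}]$ for all $k$, then $\Delta;\Gamma\vdash\ell\{\overline M\}:\Pi x{:}A[\overline M/\overline x].B[\overline M/\overline x]$. Formation: $\vdash\cdot;\cdot$; a fresh label entry $\ell(\{\overline x{:}\overline A\},x{:}A\mapsto M:B)$ may be added when $\Delta;\overline x{:}\overline A\vdash\Pi x{:}A.B:U_i$ and $\Delta;\overline x{:}\overline A,x{:}A\vdash M:B$; $\vdash\Delta;\Gamma$ and $\Delta;\Gamma\vdash A:U_i$ give $\vdash\Delta;\Gamma,x{:}A$. *)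

(* DCC (Defunctionalized Calculus of Constructions),
   represented with de Bruijn indices. *)
From Stdlib Require Import List Arith.
Import ListNotations.

(* Expressions: x | U_i | Pi x:A.B | L @ M | l_i{M1,...,Mn} *)
Inductive term : Type :=
| Var  : nat -> term
| Univ : nat -> term
| Pi   : term -> term -> term        (* Pi x:A. B ; B binds index 0 *)
| App  : term -> term -> term
| Lab  : nat -> list term -> term.

Fixpoint ren (xi : nat -> nat) (t : term) : term :=
  match t with
  | Var x => Var (xi x)
  | Univ i => Univ i
  | Pi A B => Pi (ren xi A) (ren (fun k => match k with 0 => 0 | S k' => S (xi k') end) B)
  | App M N => App (ren xi M) (ren xi N)
  | Lab l Ms => Lab l (map (ren xi) Ms)
  end.

Definition lift1 (t : term) : term := ren S t.

Definition scons (M : term) (sigma : nat -> term) : nat -> term :=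
  fun k => match k with 0 => M | S k' => sigma k' end.

Definition up (sigma : nat -> term) : nat -> term :=
  scons (Var 0) (fun k => lift1 (sigma k)).

Fixpoint subst (sigma : nat -> term) (t : term) : term :=
  match t with
  | Var x => sigma x
  | Univ i => Univ i
  | Pi A B => Pi (subst sigma A) (subst (up sigma) B)
  | App M N => App (subst sigma M) (subst sigma N)
  | Lab l Ms => Lab l (map (subst sigma) Ms)
  end.

Definition subst1 (N : term) (B : term) : term := subst (scons N Var) B.

(* The substitution [M1/x1, ..., Mn/xn] for a telescope x1,...,xn
   (xn is the innermost variable, index 0). *)
Definition tele_subst (Ms : list term) : nat -> term :=
  fold_left (fun sigma M => scons M sigma) Ms Var.

Definition tele_subst_last (Ms : list term) (N : term) : nat -> term :=
  scons N (tele_subst Ms).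

(* Label context entries  l({x1:A1,...,xn:An}, x:A |-> M : B).
   A lives in context x1..xn; M and B in context x1..xn,x. *)
Record entry : Type := mkEntry {
  lname   : nat;
  lparams : list term;    (* [A1; ...; An] (A_k in context x1..x_{k-1}) *)
  ldom    : term;
  lbody   : term;
  lcod    : term
}.

Definition label_ctx := list entry.
(* Type contexts: most recent binding first. *)
Definition ctx := list term.

Definition tele_ctx (As : list term) : ctx := rev As.

Definition label_in (D : label_ctx) (l : nat) (e : entry) : Prop :=
  In e D /\ lname e = l.

Inductive step (D : label_ctx) : term -> term -> Prop :=
| step_beta : forall l Ms N e,
    label_in D l e ->
    step D (App (Lab l Ms) N) (subst (tele_subst_last Ms N) (lbody e))
| step_pi1 : forall A A' B, step D A A' -> step D (Pi A B) (Pi A' B)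
| step_pi2 : forall A B B', step D B B' -> step D (Pi A B) (Pi A B')
| step_app1 : forall M M' N, step D M M' -> step D (App M N) (App M' N)
| step_app2 : forall M N N', step D N N' -> step D (App M N) (App M N')
| step_lab : forall l Ms1 M M' Ms2, step D M M' ->
    step D (Lab l (Ms1 ++ M :: Ms2)) (Lab l (Ms1 ++ M' :: Ms2)).

Inductive steps (D : label_ctx) : term -> term -> Prop :=
| steps_refl : forall M, steps D M M
| steps_step : forall M N P, step D M N -> steps D N P -> steps D M P.

Inductive conv (D : label_ctx) : term -> term -> Prop :=
| conv_red : forall M N P, steps D M P -> steps D N P -> conv D M N
| conv_eta_l : forall L M M' l Ns e,
    steps D L (Lab l Ns) -> steps D M M' -> label_in D l e ->
    conv D (subst (up (tele_subst Ns)) (lbody e)) (App (lift1 M') (Var 0)) ->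
    conv D L M
| conv_eta_r : forall L M M' l Ns e,
    steps D L (Lab l Ns) -> steps D M M' -> label_in D l e ->
    conv D (App (lift1 M') (Var 0)) (subst (up (tele_subst Ns)) (lbody e)) ->
    conv D M L.

Inductive wf : label_ctx -> ctx -> Prop :=
| wf_empty : wf [] []
| wf_label : forall D As A M B i l,
    (forall e, In e D -> lname e <> l) ->
    typing D (tele_ctx As) (Pi A B) (Univ i) ->
    typing D (A :: tele_ctx As) M B ->
    wf (mkEntry l As A M B :: D) []
| wf_cons : forall D G A i,
    wf D G -> typing D G A (Univ i) -> wf D (A :: G)
with typing : label_ctx -> ctx -> term -> term -> Prop :=
| ty_var : forall D G x A,
    wf D G -> nth_error G x = Some A ->
    typing D G (Var x) (ren (fun k => k + S x) A)
| ty_univ : forall D G i,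
    wf D G -> typing D G (Univ i) (Univ (S i))
| ty_pi : forall D G A B i j,
    typing D G A (Univ i) -> typing D (A :: G) B (Univ j) ->
    typing D G (Pi A B) (Univ (Nat.max i j))
| ty_app : forall D G M N A B,
    typing D G M (Pi A B) -> typing D G N A ->
    typing D G (App M N) (subst1 N B)
| ty_conv : forall D G M A B i,
    typing D G M A -> conv D A B -> typing D G B (Univ i) ->
    typing D G M B
| ty_lab : forall D G l Ms e,
    wf D G -> label_in D l e ->
    length Ms = length (lparams e) ->
    (forall k, k < length Ms ->
       typing D G (nth k Ms (Var 0))
         (subst (tele_subst (firstn k Ms)) (nth k (lparams e) (Var 0)))) ->
    typing D G (Lab l Ms)
      (Pi (subst (tele_subst Ms) (ldom e)) (subst (up (tele_subst Ms)) (lcod e))).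

(* A Tait-Girard style model.  Types are interpreted, level by level, as sets of
   terms: the universe U_j as the set of types of level j, a Pi-type as the set of
   terms whose applications land in the right sets, and a type reducing to a
   variable as the empty set.  Reduction is confluent on well-labelled terms
   (parallel reduction and complete developments), so the interpretation is
   invariant under conversion, and every derivation of M : A is sound: M[sigma]
   lies in the interpretation of A[sigma] for every semantically well-typed
   sigma.  A closed M : (Pi A:U_i. A) would then put M @ x, for a type variable x,
   into the empty set. *)

From Stdlib Require Import List Arith Lia FunctionalExtensionality PropExtensionality.
Import ListNotations.

Lemma term_ind_nested (P : term -> Prop) :
  (forall n, P (Var n)) -> (forall i, P (Univ i)) ->
  (forall A B, P A -> P B -> P (Pi A B)) ->
  (forall M N, P M -> P N -> P (App M N)) ->
  (forall l Ms, Forall P Ms -> P (Lab l Ms)) -> forall t, P t.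
Proof.
  intros Hvar Huniv Hpi Happ Hlab. fix IH 1. intros [n|i|A B|M N|l Ms].
  - apply Hvar.
  - apply Huniv.
  - apply Hpi; apply IH.
  - apply Happ; apply IH.
  - apply Hlab. induction Ms as [|M Ms IHMs]; constructor; [apply IH|exact IHMs].
Qed.

Lemma Forall_of_nth (P : term -> Prop) Ms :
  (forall k, k < length Ms -> P (nth k Ms (Var 0))) -> Forall P Ms.
Proof.
  intros H. apply Forall_forall. intros x Hx.
  destruct (In_nth _ _ (Var 0) Hx) as [k [Hk <-]]. auto.
Qed.

(** * Substitution *)

Lemma ren_as_subst xi t : ren xi t = subst (fun k => Var (xi k)) t.
Proof.
  revert xi. induction t using term_ind_nested; intros xi; simpl; try reflexivity.
  - rewrite IHt1, IHt2. do 2 f_equal. apply functional_extensionality.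
    intros [|k]; reflexivity.
  - rewrite IHt1, IHt2. reflexivity.
  - f_equal. apply map_ext_Forall. eapply Forall_impl; [|exact H]. auto.
Qed.

Lemma subst_ren sigma xi t : subst sigma (ren xi t) = subst (fun k => sigma (xi k)) t.
Proof.
  revert sigma xi. induction t using term_ind_nested; intros sigma xi; simpl; try reflexivity.
  - rewrite IHt1, IHt2. do 2 f_equal. apply functional_extensionality.
    intros [|k]; reflexivity.
  - rewrite IHt1, IHt2. reflexivity.
  - f_equal. rewrite map_map. apply map_ext_Forall. eapply Forall_impl; [|exact H]. auto.
Qed.

Lemma ren_ren xi zeta t : ren xi (ren zeta t) = ren (fun k => xi (zeta k)) t.
Proof. rewrite (ren_as_subst xi), subst_ren, <- ren_as_subst. reflexivity. Qed.

Lemma ren_subst xi sigma t : ren xi (subst sigma t) = subst (fun k => ren xi (sigma k)) t.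
Proof.
  revert xi sigma. induction t using term_ind_nested; intros xi sigma; simpl; try reflexivity.
  - rewrite IHt1, IHt2. do 2 f_equal. apply functional_extensionality.
    intros [|k]; simpl; [reflexivity|]. unfold lift1. rewrite !ren_ren. reflexivity.
  - rewrite IHt1, IHt2. reflexivity.
  - f_equal. rewrite map_map. apply map_ext_Forall. eapply Forall_impl; [|exact H]. auto.
Qed.

Lemma subst_subst sigma tau t :
  subst sigma (subst tau t) = subst (fun k => subst sigma (tau k)) t.
Proof.
  revert sigma tau. induction t using term_ind_nested; intros sigma tau; simpl; try reflexivity.
  - rewrite IHt1, IHt2. do 2 f_equal. apply functional_extensionality.
    intros [|k]; simpl; [reflexivity|]. unfold lift1. rewrite subst_ren, ren_subst. reflexivity.
  - rewrite IHt1, IHt2. reflexivity.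
  - f_equal. rewrite map_map. apply map_ext_Forall. eapply Forall_impl; [|exact H]. auto.
Qed.

Lemma subst_Var t : subst Var t = t.
Proof.
  assert (up_Var : up Var = Var) by (apply functional_extensionality; intros [|k]; reflexivity).
  induction t using term_ind_nested; simpl; try reflexivity.
  - rewrite up_Var, IHt1, IHt2. reflexivity.
  - rewrite IHt1, IHt2. reflexivity.
  - f_equal. rewrite <- map_id. apply map_ext_Forall. exact H.
Qed.

Lemma subst_up_lift1 sigma t : subst (up sigma) (lift1 t) = lift1 (subst sigma t).
Proof. unfold lift1. rewrite subst_ren, ren_subst. reflexivity. Qed.

Lemma subst1_up a sigma B : subst1 a (subst (up sigma) B) = subst (scons a sigma) B.
Proof.
  unfold subst1. rewrite subst_subst. f_equal. apply functional_extensionality.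
  intros [|k]; simpl; [reflexivity|]. unfold lift1. rewrite subst_ren. apply subst_Var.
Qed.

Lemma subst_subst1 sigma N B :
  subst sigma (subst1 N B) = subst1 (subst sigma N) (subst (up sigma) B).
Proof.
  rewrite subst1_up. unfold subst1. rewrite subst_subst. f_equal.
  apply functional_extensionality. intros [|k]; reflexivity.
Qed.

Lemma subst_scons_shift a sigma x A :
  subst (scons a sigma) (ren (fun k => k + S x) A) = subst sigma (ren (fun k => k + x) A).
Proof.
  rewrite !subst_ren. f_equal. apply functional_extensionality. intros k.
  replace (k + S x) with (S (k + x)) by lia. reflexivity.
Qed.

Lemma ren_add_0 A : ren (fun k => k + 0) A = A.
Proof.
  rewrite ren_as_subst. rewrite <- (subst_Var A) at 2. f_equal.
  apply functional_extensionality. intros k. f_equal. lia.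
Qed.

(** * Scoping and labels *)

Fixpoint closed_at (n : nat) (t : term) : Prop :=
  match t with
  | Var x => x < n
  | Univ _ => True
  | Pi A B => closed_at n A /\ closed_at (S n) B
  | App M N => closed_at n M /\ closed_at n N
  | Lab _ Ms => fold_right (fun M acc => closed_at n M /\ acc) True Ms
  end.

Lemma fold_right_and_Forall {A} (P : A -> Prop) l :
  fold_right (fun M acc => P M /\ acc) True l <-> Forall P l.
Proof.
  induction l; simpl; split; intros H; auto.
  - destruct H. constructor; tauto.
  - inversion H; subst. tauto.
Qed.

Lemma closed_at_Lab n l Ms : closed_at n (Lab l Ms) <-> Forall (closed_at n) Ms.
Proof. apply fold_right_and_Forall. Qed.

Lemma subst_closed_ext n t sigma tau :
  closed_at n t -> (forall k, k < n -> sigma k = tau k) -> subst sigma t = subst tau t.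
Proof.
  revert n sigma tau. induction t using term_ind_nested; intros m sigma tau Hc Hst; simpl in *.
  - auto.
  - reflexivity.
  - destruct Hc. f_equal; [eauto|]. eapply IHt2; [eassumption|].
    intros [|k] Hk; simpl; [reflexivity|]. unfold lift1. f_equal. apply Hst. lia.
  - destruct Hc. f_equal; eauto.
  - f_equal. apply fold_right_and_Forall in Hc. apply map_ext_Forall.
    eapply Forall_impl; [|exact (Forall_and H Hc)]. intros M [IH HM]. eauto.
Qed.

Lemma closed_at_ren n m t xi :
  closed_at n t -> (forall k, k < n -> xi k < m) -> closed_at m (ren xi t).
Proof.
  revert n m xi. induction t using term_ind_nested; intros n0 m xi Hc Hs; simpl in *.
  - auto.
  - auto.
  - destruct Hc. split; [eauto|]. eapply IHt2; [eassumption|].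
    intros [|k] Hk; simpl; [lia|]. specialize (Hs k). lia.
  - destruct Hc. split; eauto.
  - apply fold_right_and_Forall in Hc. apply fold_right_and_Forall, Forall_map.
    eapply Forall_impl; [|exact (Forall_and H Hc)]. intros M [IH HM]. eauto.
Qed.

Lemma closed_at_subst n m t sigma :
  closed_at n t -> (forall k, k < n -> closed_at m (sigma k)) -> closed_at m (subst sigma t).
Proof.
  revert n m sigma. induction t using term_ind_nested; intros n0 m sigma Hc Hs; simpl in *.
  - auto.
  - auto.
  - destruct Hc. split; [eauto|]. eapply IHt2; [eassumption|].
    intros [|k] Hk; simpl; [lia|]. eapply closed_at_ren; [apply Hs; lia|]. intros; lia.
  - destruct Hc. split; eauto.
  - apply fold_right_and_Forall in Hc. apply fold_right_and_Forall, Forall_map.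
    eapply Forall_impl; [|exact (Forall_and H Hc)]. intros M [IH HM]. eauto.
Qed.

(* [step_beta] fires whatever the number of arguments; reduction is confluent
   only on terms whose labels are declared and applied at their arity. *)
Fixpoint well_labelled (D : label_ctx) (t : term) : Prop :=
  match t with
  | Var _ => True
  | Univ _ => True
  | Pi A B => well_labelled D A /\ well_labelled D B
  | App M N => well_labelled D M /\ well_labelled D N
  | Lab l Ms => (exists e, label_in D l e /\ length Ms = length (lparams e)) /\
                fold_right (fun M acc => well_labelled D M /\ acc) True Ms
  end.

Lemma well_labelled_Lab D l Ms : well_labelled D (Lab l Ms) <->
  (exists e, label_in D l e /\ length Ms = length (lparams e)) /\ Forall (well_labelled D) Ms.
Proof. simpl. rewrite fold_right_and_Forall. tauto. Qed.

Lemma well_labelled_incl D D' t : incl D D' -> well_labelled D t -> well_labelled D' t.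
Proof.
  intros Hi. induction t using term_ind_nested; simpl; try tauto.
  rewrite !fold_right_and_Forall. intros [[e [[He1 He2] Hl]] Hf]. split.
  - exists e. repeat split; auto.
  - eapply Forall_impl; [|exact (Forall_and H Hf)]. intros M [IH HM]. auto.
Qed.

Lemma well_labelled_ren D t xi : well_labelled D t -> well_labelled D (ren xi t).
Proof.
  revert xi. induction t using term_ind_nested; intros xi; simpl; try tauto.
  - intros [HA HB]; split; auto.
  - intros [HM HN]; split; auto.
  - rewrite !fold_right_and_Forall, length_map. intros [He Hf]. split; [exact He|].
  apply Forall_map. eapply Forall_impl; [|exact (Forall_and H Hf)]. intros M [IH HM]. auto.
Qed.

Lemma well_labelled_subst D t sigma :
  (forall k, well_labelled D (sigma k)) -> well_labelled D t -> well_labelled D (subst sigma t).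
Proof.
  revert sigma. induction t using term_ind_nested; intros sigma Hs; simpl; try tauto.
  - intros; apply Hs.
  - intros [HA HB]. split; auto. apply IHt2; auto.
    intros [|k]; simpl; auto. apply well_labelled_ren. auto.
  - intros [HM HN]; split; auto.
  - rewrite !fold_right_and_Forall, length_map. intros [He Hf]. split; [exact He|].
    apply Forall_map. eapply Forall_impl; [|exact (Forall_and H Hf)]. intros M [IH HM]. auto.
Qed.

Lemma well_labelled_subst_up D t sigma :
  (forall k, well_labelled D (sigma k)) -> well_labelled D t ->
  well_labelled D (subst (up sigma) t).
Proof.
  intros Hs Ht. apply well_labelled_subst; auto.
  intros [|k]; simpl; auto. apply well_labelled_ren, Hs.
Qed.

Lemma well_labelled_subst1 D a B :
  well_labelled D a -> well_labelled D B -> well_labelled D (subst1 a B).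
Proof. intros Ha HB. apply well_labelled_subst; auto. intros [|k]; simpl; auto. Qed.

Lemma tele_subst_spec Ms j :
  tele_subst Ms j =
  if j <? length Ms then nth (length Ms - S j) Ms (Var 0) else Var (j - length Ms).
Proof.
  assert (Hfold : forall s0 j, fold_left (fun sigma M => scons M sigma) Ms s0 j =
    if j <? length Ms then nth (length Ms - S j) Ms (Var 0) else s0 (j - length Ms)).
  { induction Ms as [|M Ms IH]; intros s0 j'; simpl.
    - rewrite Nat.sub_0_r. reflexivity.
    - rewrite IH.
      destruct (Nat.ltb_spec j' (length Ms)), (Nat.ltb_spec j' (S (length Ms))); try lia.
      + replace (length Ms - j') with (S (length Ms - S j')) by lia. reflexivity.
      + replace j' with (length Ms) by lia. rewrite Nat.sub_diag. reflexivity.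
      + replace (j' - length Ms) with (S (j' - S (length Ms))) by lia. reflexivity. }
  apply Hfold.
Qed.

Lemma tele_subst_app Ms N : tele_subst (Ms ++ [N]) = tele_subst_last Ms N.
Proof. unfold tele_subst. rewrite fold_left_app. reflexivity. Qed.

Lemma tele_subst_map f Ms j : j < length Ms -> tele_subst (map f Ms) j = f (tele_subst Ms j).
Proof.
  intros Hj. rewrite !tele_subst_spec, length_map.
  destruct (Nat.ltb_spec j (length Ms)); [|lia].
  rewrite (nth_indep _ (Var 0) (f (Var 0))) by (rewrite length_map; lia).
  apply map_nth.
Qed.

Lemma tele_subst_wl D Ms k : Forall (well_labelled D) Ms -> well_labelled D (tele_subst Ms k).
Proof.
  intros HF. rewrite tele_subst_spec. destruct (Nat.ltb_spec k (length Ms)); simpl; auto.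
  rewrite Forall_forall in HF. apply HF, nth_In. lia.
Qed.

Lemma tele_subst_closed m Ms k :
  Forall (closed_at m) Ms -> k < length Ms -> closed_at m (tele_subst Ms k).
Proof.
  intros HF Hk. rewrite tele_subst_spec. destruct (Nat.ltb_spec k (length Ms)); [|lia].
  rewrite Forall_forall in HF. apply HF, nth_In. lia.
Qed.

Lemma subst_tele_subst sigma Ms t : closed_at (length Ms) t ->
  subst sigma (subst (tele_subst Ms) t) = subst (tele_subst (map (subst sigma) Ms)) t.
Proof.
  intros Hc. rewrite subst_subst. eapply subst_closed_ext; [exact Hc|].
  intros j Hj. rewrite tele_subst_map by lia. reflexivity.
Qed.

Lemma subst_up_tele_subst sigma Ms t : closed_at (S (length Ms)) t ->
  subst (up sigma) (subst (up (tele_subst Ms)) t) =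
  subst (up (tele_subst (map (subst sigma) Ms))) t.
Proof.
  intros Hc. rewrite subst_subst. eapply subst_closed_ext; [exact Hc|].
  intros [|j] Hj; simpl; [reflexivity|].
  rewrite subst_up_lift1, tele_subst_map by lia. reflexivity.
Qed.

Lemma subst_tele_subst_last sigma Ms N t : closed_at (S (length Ms)) t ->
  subst sigma (subst (tele_subst_last Ms N) t) =
  subst (tele_subst_last (map (subst sigma) Ms) (subst sigma N)) t.
Proof.
  intros Hc. rewrite <- !tele_subst_app, subst_tele_subst, map_app; [reflexivity|].
  rewrite length_app. simpl. rewrite Nat.add_1_r. exact Hc.
Qed.

Lemma subst_tele_subst_shift Ms x A : x < length Ms ->
  closed_at (length Ms - S x) A ->
  subst (tele_subst Ms) (ren (fun j => j + S x) A) =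
  subst (tele_subst (firstn (length Ms - S x) Ms)) A.
Proof.
  intros Hx Hc. rewrite subst_ren. eapply subst_closed_ext; [exact Hc|].
  intros j Hj. rewrite !tele_subst_spec, length_firstn, nth_firstn.
  destruct (Nat.ltb_spec (j + S x) (length Ms)); [|lia].
  destruct (Nat.ltb_spec j (Nat.min (length Ms - S x) (length Ms))); [|lia].
  destruct (Nat.ltb_spec (Nat.min (length Ms - S x) (length Ms) - S j) (length Ms - S x)); [|lia].
  f_equal. lia.
Qed.

(** * Syntactic invariants of typing *)

Scheme wf_mut := Induction for wf Sort Prop
  with typing_mut := Induction for typing Sort Prop.
Combined Scheme wf_typing_mut from wf_mut, typing_mut.

Definition ctx_ok (D : label_ctx) (G : ctx) : Prop :=
  forall x A, nth_error G x = Some A -> well_labelled D A /\ closed_at (length G - S x) A.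

Definition labels_unique (D : label_ctx) : Prop :=
  forall e1 e2, In e1 D -> In e2 D -> lname e1 = lname e2 -> e1 = e2.

Record entry_ok (D : label_ctx) (e : entry) : Prop := {
  entry_params_ok : ctx_ok D (rev (lparams e));
  entry_dom_wl : well_labelled D (ldom e);
  entry_cod_wl : well_labelled D (lcod e);
  entry_body_wl : well_labelled D (lbody e);
  entry_dom_closed : closed_at (length (lparams e)) (ldom e);
  entry_cod_closed : closed_at (S (length (lparams e))) (lcod e);
  entry_body_closed : closed_at (S (length (lparams e))) (lbody e) }.

Record label_ctx_ok (D : label_ctx) : Prop := {
  label_ctx_unique : labels_unique D;
  label_ctx_entries : forall e, In e D -> entry_ok D e }.

Record typing_invariant (D : label_ctx) (G : ctx) (M A : term) : Prop := {
  typing_label_ctx_ok : label_ctx_ok D;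
  typing_ctx_ok : ctx_ok D G;
  typing_term_wl : well_labelled D M;
  typing_type_wl : well_labelled D A;
  typing_term_closed : closed_at (length G) M;
  typing_type_closed : closed_at (length G) A }.

Lemma ctx_ok_incl D D' G : incl D D' -> ctx_ok D G -> ctx_ok D' G.
Proof.
  intros Hi H x A Hx. destruct (H x A Hx). split; auto. eapply well_labelled_incl; eauto.
Qed.

Lemma entry_ok_incl D D' e : incl D D' -> entry_ok D e -> entry_ok D' e.
Proof.
  intros Hi [Hp Hd Hc Hb Hdc Hcc Hbc].
  split; eauto using ctx_ok_incl, well_labelled_incl.
Qed.

Lemma ctx_ok_cons D G A :
  ctx_ok D G -> well_labelled D A -> closed_at (length G) A -> ctx_ok D (A :: G).
Proof.
  intros HG HA Hc [|x] X Hx; simpl in Hx.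
  - injection Hx as <-. simpl. rewrite Nat.sub_0_r. auto.
  - destruct (HG x X Hx). simpl. auto.
Qed.

Lemma label_ctx_ok_cons D e :
  label_ctx_ok D -> (forall e', In e' D -> lname e' <> lname e) -> entry_ok D e ->
  label_ctx_ok (e :: D).
Proof.
  intros [Hu HD] Hfresh He.
  assert (Hi : incl D (e :: D)) by apply incl_tl, incl_refl.
  split.
  - intros e1 e2 [<-|H1] [<-|H2] Hl; auto.
    + exfalso. apply (Hfresh e2 H2). auto.
    + exfalso. apply (Hfresh e1 H1). auto.
  - intros e' [<-|He']; eapply entry_ok_incl; eauto.
Qed.

Lemma lab_typing_invariant D G l Ms e :
  label_ctx_ok D -> ctx_ok D G -> label_in D l e -> length Ms = length (lparams e) ->
  (forall k, k < length Ms ->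
     well_labelled D (nth k Ms (Var 0)) /\ closed_at (length G) (nth k Ms (Var 0))) ->
  typing_invariant D G (Lab l Ms)
    (Pi (subst (tele_subst Ms) (ldom e)) (subst (up (tele_subst Ms)) (lcod e))).
Proof.
  intros HD HG Hl Hlen HMs.
  destruct (label_ctx_entries D HD e (proj1 Hl)) as [_ Hd Hc _ Hdc Hcc _].
  assert (Hwl : Forall (well_labelled D) Ms) by (apply Forall_of_nth; apply HMs).
  assert (Hcl : Forall (closed_at (length G)) Ms) by (apply Forall_of_nth; apply HMs).
  split; auto.
  - apply well_labelled_Lab. eauto.
  - simpl. split; apply well_labelled_subst; auto.
    + intros; apply tele_subst_wl; auto.
    + intros [|k]; simpl; auto. apply well_labelled_ren, tele_subst_wl; auto.
  - apply closed_at_Lab; auto.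
  - simpl. split.
    + eapply closed_at_subst; [exact Hdc|]. intros k Hk. apply tele_subst_closed; auto. lia.
    + eapply closed_at_subst; [exact Hcc|]. intros [|k] Hk; simpl; [lia|].
      eapply closed_at_ren; [apply tele_subst_closed; eauto; lia|]. intros; lia.
Qed.

Lemma typing_syntax :
  (forall D G, wf D G -> label_ctx_ok D /\ ctx_ok D G) /\
  (forall D G M A, typing D G M A -> typing_invariant D G M A).
Proof.
  apply (wf_typing_mut (fun D G _ => label_ctx_ok D /\ ctx_ok D G)
                       (fun D G M A _ => typing_invariant D G M A)).
  - split; [split; [intros e1 e2 []|intros e []]|intros [|x] A Hx; discriminate].
  - intros D As A M B i l Hfresh _ [HD HP HPi _ HPic _] _ [_ _ HM _ HMc _].
    unfold tele_ctx in *. rewrite length_rev in HPic. simpl in HMc. rewrite length_rev in HMc.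
    destruct HPi as [HA HB]. destruct HPic as [HAc HBc].
    split; [|intros [|x] X Hx; discriminate].
    apply label_ctx_ok_cons; auto. split; auto.
  - intros D G A i _ [HD HG] _ [_ _ HA _ HAc _]. split; auto. apply ctx_ok_cons; auto.
  - intros D G x A _ [HD HG] Hx. destruct (HG x A Hx) as [HA HAc].
    assert (x < length G) by (apply nth_error_Some; congruence).
    split; simpl; auto.
    + apply well_labelled_ren; auto.
    + eapply closed_at_ren; eauto. intros; lia.
  - intros D G i _ [HD HG]. split; simpl; auto.
  - intros D G A B i j _ [HD HG HA _ HAc _] _ [_ _ HB _ HBc _]. split; simpl; auto.
  - intros D G M N A B _ [HD HG HM [HA HB] HMc [HAc HBc]] _ [_ _ HN _ HNc _].
    split; simpl; auto.
    + apply well_labelled_subst; auto. intros [|k]; simpl; auto.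
    + eapply closed_at_subst; eauto. intros [|k] Hk; simpl; auto. lia.
  - intros D G M A B i _ [HD HG HM _ HMc _] _ _ [_ _ HB _ HBc _]. split; auto.
  - intros D G l Ms e _ [HD HG] Hl Hlen _ IH.
    apply lab_typing_invariant; auto.
    intros k Hk. destruct (IH k Hk). auto.
Qed.

Lemma typing_wl_incl D D' G M A : typing D' G M A -> incl D' D ->
  well_labelled D M /\ well_labelled D A.
Proof.
  intros H Hi. destruct (proj2 typing_syntax _ _ _ _ H) as [_ _ HM HA _ _].
  split; eapply well_labelled_incl; eauto.
Qed.

(** * Confluence *)

Lemma steps_trans D a b c : steps D a b -> steps D b c -> steps D a c.
Proof. induction 1; intros; auto. econstructor; eauto. Qed.

Lemma steps_one D a b : step D a b -> steps D a b.
Proof. intros; econstructor; eauto. constructor. Qed.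

Lemma steps_pi D A A' B B' : steps D A A' -> steps D B B' -> steps D (Pi A B) (Pi A' B').
Proof.
  intros H1 H2. apply steps_trans with (Pi A' B).
  - induction H1; [constructor|]. econstructor; [apply step_pi1; eauto|]. auto.
  - induction H2; [constructor|]. econstructor; [apply step_pi2; eauto|]. auto.
Qed.

Lemma steps_app D M M' N N' : steps D M M' -> steps D N N' -> steps D (App M N) (App M' N').
Proof.
  intros H1 H2. apply steps_trans with (App M' N).
  - induction H1; [constructor|]. econstructor; [apply step_app1; eauto|]. auto.
  - induction H2; [constructor|]. econstructor; [apply step_app2; eauto|]. auto.
Qed.

Lemma steps_lab D l Ms Ms' : Forall2 (steps D) Ms Ms' -> steps D (Lab l Ms) (Lab l Ms').
Proof.
  intros H.
  enough (Hgen : forall pre, steps D (Lab l (pre ++ Ms)) (Lab l (pre ++ Ms'))) by apply (Hgen []).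
  induction H as [|M M' Ms Ms' HM _ IH]; intros pre.
  - constructor.
  - apply steps_trans with (Lab l (pre ++ M' :: Ms)).
    + induction HM; [constructor|]. econstructor; [apply step_lab; eauto|]. auto.
    + specialize (IH (pre ++ [M'])). rewrite <- !app_assoc in IH. exact IH.
Qed.

Lemma step_incl D D' t t' : incl D D' -> step D t t' -> step D' t t'.
Proof.
  intros Hi. induction 1 as [l Ms N e [He Hl]| | | | |]; constructor; auto. split; auto.
Qed.

Lemma steps_incl D D' t t' : incl D D' -> steps D t t' -> steps D' t t'.
Proof. intros Hi. induction 1; econstructor; eauto using step_incl. Qed.

Lemma conv_incl D D' A B : incl D D' -> conv D A B -> conv D' A B.
Proof.
  intros Hi. assert (Hl : forall l e, label_in D l e -> label_in D' l e)
    by (intros l e [He Hn]; split; auto).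
  induction 1.
  - eapply conv_red; eapply steps_incl; eauto.
  - eapply conv_eta_l; eauto using steps_incl.
  - eapply conv_eta_r; eauto using steps_incl.
Qed.

Definition head_shape (t : term) : option term :=
  match t with
  | Var n => Some (Var n)
  | Univ i => Some (Univ i)
  | Pi _ _ => Some (Pi (Univ 0) (Univ 0))
  | Lab l _ => Some (Lab l [])
  | App _ _ => None
  end.

Lemma steps_head_shape D t u :
  steps D t u -> head_shape t <> None -> head_shape u = head_shape t.
Proof.
  induction 1 as [|t u v Htu _ IH]; intros Ht; [reflexivity|].
  destruct Htu; simpl in *; try congruence; rewrite IH; auto; discriminate.
Qed.

Lemma steps_univ D i P : steps D (Univ i) P -> P = Univ i.
Proof. intros H. remember (Univ i) as u. induction H; subst; auto. inversion H. Qed.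

Lemma steps_var D n P : steps D (Var n) P -> P = Var n.
Proof. intros H. remember (Var n) as u. induction H; subst; auto. inversion H. Qed.

Lemma steps_pi_inv D A B P : steps D (Pi A B) P ->
  exists A' B', P = Pi A' B' /\ steps D A A' /\ steps D B B'.
Proof.
  intros H. remember (Pi A B) as u. revert A B Hequ.
  induction H as [|t u v Htu _ IH]; intros A B ->.
  - exists A, B. repeat split; constructor.
  - inversion Htu; subst.
    + destruct (IH A' B eq_refl) as [A2 [B2 [-> [h1 h2]]]].
      exists A2, B2. repeat split; auto. econstructor; eauto.
    + destruct (IH A B' eq_refl) as [A2 [B2 [-> [h1 h2]]]].
      exists A2, B2. repeat split; auto. econstructor; eauto.
Qed.

Section Confluence.

Variable D : label_ctx.
Hypothesis D_ok : label_ctx_ok D.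

Lemma label_in_unique l e e' : label_in D l e -> label_in D l e' -> e = e'.
Proof.
  intros [He Hl] [He' Hl']. apply (label_ctx_unique D D_ok); auto. congruence.
Qed.

Lemma label_body_closed l e : label_in D l e -> closed_at (S (length (lparams e))) (lbody e).
Proof. intros [He _]. exact (entry_body_closed _ _ (label_ctx_entries D D_ok e He)). Qed.

Lemma label_body_wl l e : label_in D l e -> well_labelled D (lbody e).
Proof. intros [He _]. exact (entry_body_wl _ _ (label_ctx_entries D D_ok e He)). Qed.

(* Only at the declared arity does a label step commute with substitution. *)
Inductive pstep : term -> term -> Prop :=
| pstep_var n : pstep (Var n) (Var n)
| pstep_univ i : pstep (Univ i) (Univ i)
| pstep_pi A A' B B' : pstep A A' -> pstep B B' -> pstep (Pi A B) (Pi A' B')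
| pstep_app M M' N N' : pstep M M' -> pstep N N' -> pstep (App M N) (App M' N')
| pstep_lab l Ms Ms' : Forall2 pstep Ms Ms' -> pstep (Lab l Ms) (Lab l Ms')
| pstep_beta l Ms Ms' N N' e : label_in D l e -> length Ms = length (lparams e) ->
    Forall2 pstep Ms Ms' -> pstep N N' ->
    pstep (App (Lab l Ms) N) (subst (tele_subst_last Ms' N') (lbody e)).

Lemma pstep_ind_nested (P : term -> term -> Prop) :
  (forall n, P (Var n) (Var n)) ->
  (forall i, P (Univ i) (Univ i)) ->
  (forall A A' B B', pstep A A' -> P A A' -> pstep B B' -> P B B' -> P (Pi A B) (Pi A' B')) ->
  (forall M M' N N', pstep M M' -> P M M' -> pstep N N' -> P N N' -> P (App M N) (App M' N')) ->
  (forall l Ms Ms', Forall2 (fun a b => pstep a b /\ P a b) Ms Ms' -> P (Lab l Ms) (Lab l Ms')) ->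
  (forall l Ms Ms' N N' e, label_in D l e -> length Ms = length (lparams e) ->
    Forall2 (fun a b => pstep a b /\ P a b) Ms Ms' -> pstep N N' -> P N N' ->
    P (App (Lab l Ms) N) (subst (tele_subst_last Ms' N') (lbody e))) ->
  forall t t', pstep t t' -> P t t'.
Proof.
  intros Hvar Huniv Hpi Happ Hlab Hbeta. fix IH 3. intros t t' [| | | |l Ms Ms' HMs|l Ms Ms' N N' e Hl Hlen HMs HN].
  - apply Hvar.
  - apply Huniv.
  - apply Hpi; auto.
  - apply Happ; auto.
  - apply Hlab. induction HMs; constructor; auto.
  - apply Hbeta; auto. clear Hl Hlen. induction HMs; constructor; auto.
Qed.

Lemma pstep_refl t : pstep t t.
Proof.
  induction t using term_ind_nested; constructor; auto.
  induction H; constructor; auto.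
Qed.

Lemma Forall2_pstep_refl Ms : Forall2 pstep Ms Ms.
Proof. induction Ms; constructor; auto using pstep_refl. Qed.

Lemma Forall2_map {A B} (R : B -> B -> Prop) (f g : A -> B) l l' :
  Forall2 (fun a b => R (f a) (g b)) l l' -> Forall2 R (map f l) (map g l').
Proof. induction 1; constructor; auto. Qed.

Lemma pstep_ren t t' xi : pstep t t' -> pstep (ren xi t) (ren xi t').
Proof.
  intros H. revert xi. induction H using pstep_ind_nested; intros xi; simpl; try constructor; auto.
  - apply Forall2_map. eapply Forall2_impl; [|exact H]. intros a b [_ h]. apply h.
  - rewrite !ren_as_subst, subst_tele_subst_last, <- ren_as_subst.
    2:{ rewrite <- (Forall2_length H1), H0. eapply label_body_closed; eauto. }
    rewrite <- !(map_ext _ _ (ren_as_subst xi)).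
    econstructor; eauto.
    + rewrite length_map. auto.
    + apply Forall2_map. eapply Forall2_impl; [|exact H1]. intros a b [_ h]. apply h.
    + rewrite <- ren_as_subst. auto.
Qed.

Lemma pstep_subst t t' sigma sigma' : pstep t t' ->
  (forall k, pstep (sigma k) (sigma' k)) -> pstep (subst sigma t) (subst sigma' t').
Proof.
  intros H. revert sigma sigma'.
  induction H using pstep_ind_nested; intros sigma sigma' Hs; simpl; try constructor; auto.
  - apply IHpstep2. intros [|k]; simpl; [constructor|]. apply pstep_ren; auto.
  - apply Forall2_map. eapply Forall2_impl; [|exact H]. intros a b [_ h]. auto.
  - rewrite subst_tele_subst_last.
    2:{ rewrite <- (Forall2_length H1), H0. eapply label_body_closed; eauto. }
    econstructor; eauto.
    + rewrite length_map. auto.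
    + apply Forall2_map. eapply Forall2_impl; [|exact H1]. intros a b [_ h]. auto.
Qed.

Lemma pstep_tele_subst Ms Ms' : Forall2 pstep Ms Ms' ->
  forall k, pstep (tele_subst Ms k) (tele_subst Ms' k).
Proof.
  unfold tele_subst. generalize (fun k => pstep_refl (Var k)).
  generalize (@Var) at 2 4 as s'. generalize (@Var) as s.
  intros s s' Hs H. revert s s' Hs. induction H; intros s s' Hs; simpl; auto.
  apply IHForall2. intros [|k]; simpl; auto.
Qed.

Lemma pstep_tele_subst_last Ms Ms' N N' : Forall2 pstep Ms Ms' -> pstep N N' ->
  forall k, pstep (tele_subst_last Ms N k) (tele_subst_last Ms' N' k).
Proof.
  intros HMs HN. rewrite <- !tele_subst_app.
  apply pstep_tele_subst, Forall2_app; auto.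
Qed.

Definition label_lookup (l : nat) : option entry := find (fun e => lname e =? l) D.

Lemma label_lookup_label_in l e : label_lookup l = Some e -> label_in D l e.
Proof.
  intros H. apply find_some in H as [Hin Hl]. split; auto. apply Nat.eqb_eq; auto.
Qed.

Lemma label_in_label_lookup l e : label_in D l e -> label_lookup l = Some e.
Proof.
  intros Hl. destruct (label_lookup l) as [e'|] eqn:E.
  - f_equal. eapply label_in_unique; eauto using label_lookup_label_in.
  - destruct Hl as [Hin Hn]. eapply find_none in E; [|exact Hin].
    rewrite Hn, Nat.eqb_refl in E. discriminate.
Qed.

(* Takahashi's complete development. *)
Fixpoint dev (t : term) : term :=
  match t with
  | Var n => Var n
  | Univ i => Univ i
  | Pi A B => Pi (dev A) (dev B)
  | App (Lab l Ms) N =>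
      match label_lookup l with
      | Some e => if length Ms =? length (lparams e)
                  then subst (tele_subst_last (map dev Ms) (dev N)) (lbody e)
                  else App (Lab l (map dev Ms)) (dev N)
      | None => App (Lab l (map dev Ms)) (dev N)
      end
  | App M N => App (dev M) (dev N)
  | Lab l Ms => Lab l (map dev Ms)
  end.

Lemma Forall2_pstep_dev Ms Ms' :
  Forall2 (fun a b => pstep a b /\ pstep b (dev a)) Ms Ms' -> Forall2 pstep Ms' (map dev Ms).
Proof. induction 1; simpl; constructor; tauto. Qed.

Lemma pstep_dev t t' : pstep t t' -> pstep t' (dev t).
Proof.
  intros H. induction H using pstep_ind_nested; simpl; try constructor; auto.
  - destruct M; try (constructor; auto; fail).
    inversion H; subst. inversion IHpstep1; subst.
    destruct (label_lookup n) as [e|] eqn:E; [|constructor; auto].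
    destruct (Nat.eqb_spec (length l) (length (lparams e))); [|constructor; auto].
    econstructor; eauto.
    + apply label_lookup_label_in; auto.
    + erewrite <- Forall2_length by eassumption. auto.
  - apply Forall2_pstep_dev; auto.
  - rewrite (label_in_label_lookup _ _ H), H0, Nat.eqb_refl.
    apply pstep_subst; [apply pstep_refl|].
    apply pstep_tele_subst_last; auto. apply Forall2_pstep_dev; auto.
Qed.

Inductive psteps : term -> term -> Prop :=
| psteps_refl t : psteps t t
| psteps_step t u v : pstep t u -> psteps u v -> psteps t v.

Lemma psteps_strip t t1 t2 : pstep t t1 -> psteps t t2 ->
  exists t3, psteps t1 t3 /\ pstep t2 t3.
Proof.
  intros H1 H2. revert t1 H1. induction H2 as [|t u v Htu _ IH]; intros t1 H1.
  - exists t1. split; [constructor|auto].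
  - destruct (IH (dev t)) as [t3 [h1 h2]]; [apply pstep_dev; auto|].
    exists t3. split; auto. econstructor; [apply pstep_dev; eauto|]. auto.
Qed.

Lemma psteps_confluent t t1 t2 : psteps t t1 -> psteps t t2 ->
  exists t3, psteps t1 t3 /\ psteps t2 t3.
Proof.
  intros H1. revert t2. induction H1 as [|t u v Htu _ IH]; intros t2 H2.
  - exists t2. split; auto. constructor.
  - destruct (psteps_strip _ _ _ Htu H2) as [t3 [h1 h2]].
    destruct (IH t3 h1) as [t4 [g1 g2]].
    exists t4. split; auto. econstructor; eauto.
Qed.

Lemma step_wl t t' : well_labelled D t -> step D t t' -> well_labelled D t'.
Proof.
  intros Hwl H. induction H; simpl in *; try tauto.
  - destruct Hwl as [HL HN]. apply well_labelled_Lab in HL as [_ HMs].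
    apply well_labelled_subst; [|eapply label_body_wl; eauto].
    rewrite <- tele_subst_app. intros k. apply tele_subst_wl, Forall_app. auto.
  - apply well_labelled_Lab in Hwl as [[e [He Hl]] HF]. apply well_labelled_Lab. split.
    + exists e. split; auto. rewrite !length_app in *. auto.
    + apply Forall_app in HF as [HF1 HF2]. inversion HF2; subst. apply Forall_app. auto.
Qed.

Lemma steps_wl t t' : well_labelled D t -> steps D t t' -> well_labelled D t'.
Proof. intros Hwl H. induction H; eauto using step_wl. Qed.

Lemma step_pstep t t' : well_labelled D t -> step D t t' -> pstep t t'.
Proof.
  intros Hwl H. induction H; simpl in *.
  - destruct Hwl as [HL _]. apply well_labelled_Lab in HL as [[e' [He' Hl]] _].
    rewrite (label_in_unique _ _ _ He' H) in Hl.
    econstructor; eauto using Forall2_pstep_refl, pstep_refl.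
  - constructor; [tauto|apply pstep_refl].
  - constructor; [apply pstep_refl|tauto].
  - constructor; [tauto|apply pstep_refl].
  - constructor; [apply pstep_refl|tauto].
  - apply well_labelled_Lab in Hwl as [_ HF]. apply Forall_app in HF as [_ HF2].
    inversion HF2; subst. constructor.
    apply Forall2_app; [apply Forall2_pstep_refl|]. constructor; auto using Forall2_pstep_refl.
Qed.

Lemma pstep_steps t t' : pstep t t' -> steps D t t'.
Proof.
  assert (HMs : forall Ms Ms', Forall2 (fun a b => pstep a b /\ steps D a b) Ms Ms' ->
                Forall2 (steps D) Ms Ms').
  { intros Ms Ms' H. eapply Forall2_impl; [|exact H]. intros a b [_ h]. exact h. }
  intros H. induction H using pstep_ind_nested.
  - constructor.
  - constructor.
  - apply steps_pi; auto.
  - apply steps_app; auto.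
  - apply steps_lab; auto.
  - apply steps_trans with (App (Lab l Ms') N').
    + apply steps_app; auto. apply steps_lab; auto.
    + apply steps_one. constructor. auto.
Qed.

Lemma steps_confluent t t1 t2 : well_labelled D t -> steps D t t1 -> steps D t t2 ->
  exists t3, steps D t1 t3 /\ steps D t2 t3.
Proof.
  assert (to_psteps : forall t t', well_labelled D t -> steps D t t' -> psteps t t').
  { intros u u' Hwl H. induction H; [constructor|].
    econstructor; eauto using step_pstep, step_wl. }
  assert (of_psteps : forall t t', psteps t t' -> steps D t t').
  { induction 1; [constructor|]. eapply steps_trans; eauto using pstep_steps. }
  intros Hwl H1 H2.
  destruct (psteps_confluent t t1 t2) as [t3 [h1 h2]]; auto.
  exists t3. auto.
Qed.

Lemma steps_subst t t' sigma :
  well_labelled D t -> steps D t t' -> steps D (subst sigma t) (subst sigma t').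
Proof.
  intros Hwl H. induction H as [|t u v Htu _ IH]; [constructor|].
  apply steps_trans with (subst sigma u).
  - apply pstep_steps, pstep_subst; auto using pstep_refl, step_pstep.
  - eauto using step_wl.
Qed.

Lemma reducts_same_head M P Q : well_labelled D M -> steps D M P -> steps D M Q ->
  head_shape P <> None -> head_shape Q <> None -> head_shape P = head_shape Q.
Proof.
  intros Hwl HP HQ HsP HsQ.
  destruct (steps_confluent M P Q Hwl HP HQ) as [R [HPR HQR]].
  rewrite <- (steps_head_shape D P R HPR HsP). exact (steps_head_shape D Q R HQR HsQ).
Qed.

End Confluence.

(** * A model of types as sets of terms *)

Section Model.

Variable D : label_ctx.
Hypothesis D_ok : label_ctx_ok D.

Definition pi_set (XA : term -> Prop) (F : term -> term -> Prop) (f : term) : Prop :=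
  well_labelled D f /\ forall a, XA a -> F a (App f a).

(* [U j] interprets the universe [U_j] for [j < i]; types reducing to a variable
   denote the empty set. *)
Inductive interp (U : nat -> term -> Prop) (i : nat) : term -> (term -> Prop) -> Prop :=
| interp_univ A j : well_labelled D A -> j < i -> steps D A (Univ j) -> interp U i A (U j)
| interp_var A n : well_labelled D A -> steps D A (Var n) -> interp U i A (fun _ => False)
| interp_pi A A1 B XA F : well_labelled D A -> steps D A (Pi A1 B) -> interp U i A1 XA ->
    (forall a, XA a -> interp U i (subst1 a B) (F a)) -> interp U i A (pi_set XA F).

Fixpoint univ_below (i : nat) : nat -> term -> Prop :=
  match i with
  | 0 => fun _ _ => False
  | S i' => fun j A =>
      if j =? i' then exists X, interp (univ_below i') i' A X else univ_below i' j A
  end.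

Definition univ_set (j : nat) (A : term) : Prop := exists X, interp (univ_below j) j A X.

Lemma univ_below_spec i j : j < i -> univ_below i j = univ_set j.
Proof.
  induction i; intros Hj; [lia|]. simpl. apply functional_extensionality. intros A.
  destruct (Nat.eqb_spec j i) as [->|Hne]; [reflexivity|]. rewrite IHi by lia. reflexivity.
Qed.

Lemma interp_wl U i A X : interp U i A X -> well_labelled D A.
Proof. destruct 1; auto. Qed.

Lemma univ_below_wl i j A : univ_below i j A -> well_labelled D A.
Proof.
  induction i; simpl; [tauto|].
  destruct (j =? i); [intros [X HX]; eapply interp_wl; eauto|auto].
Qed.

Lemma interp_elem_wl i A X t : interp (univ_below i) i A X -> X t -> well_labelled D t.
Proof.
  intros H. revert t. induction H; intros t Ht.
  - eapply univ_below_wl; eauto.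
  - destruct Ht.
  - apply Ht.
Qed.

Lemma interp_expand U i A A' X : interp U i A' X -> steps D A A' -> well_labelled D A ->
  interp U i A X.
Proof.
  intros H HA Hwl. destruct H.
  - eapply interp_univ; eauto. eapply steps_trans; eauto.
  - eapply interp_var; eauto. eapply steps_trans; eauto.
  - eapply interp_pi; eauto. eapply steps_trans; eauto.
Qed.

Lemma interp_steps U i A A' X : interp U i A X -> steps D A A' -> interp U i A' X.
Proof.
  intros H. revert A'.
  induction H as [A j HA Hj HAj|A n HA HAn|A A1 B XA F HA HApi HA1 IHA1 HB IHB];
    intros A' HA'; pose proof (steps_wl D D_ok _ _ HA HA') as HwlA';
    [destruct (steps_confluent D D_ok _ _ _ HA HA' HAj) as [R [HR HjR]]
    |destruct (steps_confluent D D_ok _ _ _ HA HA' HAn) as [R [HR HjR]]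
    |destruct (steps_confluent D D_ok _ _ _ HA HA' HApi) as [R [HR HjR]]].
  - apply steps_univ in HjR. subst. eapply interp_univ; eauto.
  - apply steps_var in HjR. subst. eapply interp_var; eauto.
  - apply steps_pi_inv in HjR as [A2 [B2 [-> [HA12 HB2]]]].
    destruct (steps_wl D D_ok _ _ HA HApi) as [HwlA1 HwlB].
    apply interp_pi with A2 B2; auto.
    intros a Ha. apply IHB; auto. apply steps_subst; auto.
Qed.

Lemma interp_joinable U i A A' P X : interp U i A' X -> steps D A P -> steps D A' P ->
  well_labelled D A -> interp U i A X.
Proof. intros H HA HA' Hwl. eapply interp_expand; [eapply interp_steps|..]; eauto. Qed.

Lemma interp_not_lab U i A X l Ms : interp U i A X -> ~ steps D A (Lab l Ms).
Proof.
  intros H HL. destruct H as [A j HA _ HR|A n HA HR|A A1 B XA F HA HR _ _];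
    pose proof (reducts_same_head D D_ok _ _ _ HA HL HR ltac:(discriminate) ltac:(discriminate));
    discriminate.
Qed.

Lemma pi_set_ext XA F F' : (forall a, XA a -> F a = F' a) -> pi_set XA F = pi_set XA F'.
Proof.
  intros HF. apply functional_extensionality. intros f.
  apply propositional_extensionality. unfold pi_set.
  split; intros [Hf HFf]; split; auto; intros a Ha; [rewrite <- HF|rewrite HF]; auto.
Qed.

Lemma interp_functional i A X Y :
  interp (univ_below i) i A X -> interp (univ_below i) i A Y -> X = Y.
Proof.
  intros H. revert Y.
  induction H as [A j HA Hj HR|A n HA HR|A A1 B XA F HA HR HA1 IHA1 HB IHB]; intros Y HY;
    destruct HY as [? j' _ _ HR'|? n' _ HR'|? A1' B' XA' F' _ HR' HA1' HB'];
    pose proof (reducts_same_head D D_ok _ _ _ HA HR HR' ltac:(discriminate) ltac:(discriminate))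
      as Ehead; simpl in Ehead; try discriminate Ehead.
  - injection Ehead as ->. reflexivity.
  - reflexivity.
  - destruct (steps_confluent D D_ok _ _ _ HA HR HR') as [R [HRR HRR']].
    apply steps_pi_inv in HRR as [A2 [B2 [-> [HA12 HB2]]]].
    apply steps_pi_inv in HRR' as [A2' [B2' [E [HA12' HB2']]]]. injection E as <- <-.
    destruct (steps_wl D D_ok _ _ HA HR) as [HwlA1 HwlB].
    destruct (steps_wl D D_ok _ _ HA HR') as [_ HwlB'].
    assert (EXA : XA = XA') by (apply IHA1; eapply interp_joinable; eauto). subst XA'.
    apply pi_set_ext. intros a Ha. apply IHB; auto.
    pose proof (interp_elem_wl _ _ _ _ HA1 Ha) as Hwla.
    eapply interp_joinable; [apply HB'; auto|apply steps_subst; eauto|apply steps_subst; eauto|].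
    apply well_labelled_subst; auto. intros [|k]; simpl; auto.
Qed.

Lemma interp_cumulative i k A X :
  interp (univ_below i) i A X -> i <= k -> interp (univ_below k) k A X.
Proof.
  intros H Hk. induction H.
  - rewrite (univ_below_spec i j), <- (univ_below_spec k j) by lia.
    eapply interp_univ; eauto. lia.
  - eapply interp_var; eauto.
  - eapply interp_pi; eauto.
Qed.

Lemma interp_elems_eq i A Y : interp (univ_below i) i A Y ->
  (fun t => exists Y', interp (univ_below i) i A Y' /\ Y' t) = Y.
Proof.
  intros HY. apply functional_extensionality. intros t. apply propositional_extensionality.
  split; [intros [Y' [HY' Ht]]; rewrite (interp_functional _ _ _ _ HY HY')|intros Ht]; eauto.
Qed.

Lemma interp_pi_inv i A B X : interp (univ_below i) i (Pi A B) X ->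
  exists XA F, interp (univ_below i) i A XA /\
    (forall a, XA a -> interp (univ_below i) i (subst1 a B) (F a)) /\ X = pi_set XA F.
Proof.
  intros H. inversion H as [? j HA _ HR|? n HA HR|? A1 B1 XA F HA HR HA1 HB]; subst;
    apply steps_pi_inv in HR as [A2 [B2 [E [HA2 HB2]]]]; try discriminate.
  injection E as -> ->. destruct HA as [HwlA HwlB].
  exists XA, F. repeat split; [eapply interp_expand; eauto|].
  intros a Ha. eapply interp_expand; [apply HB; auto|apply steps_subst; auto|].
  apply well_labelled_subst1; auto. eapply interp_elem_wl; eauto.
Qed.

Lemma interp_elem_expand i A X t t' : interp (univ_below i) i A X -> X t' ->
  steps D t t' -> well_labelled D t -> X t.
Proof.
  intros H. revert t t'.
  induction H as [A j HA Hj HR|A n HA HR|A A1 B XA F HA HR HA1 IHA1 HB IHB];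
    intros t t' Ht' Htt' Hwl.
  - rewrite univ_below_spec in * by auto. destruct Ht' as [Y HY].
    exists Y. eapply interp_expand; eauto.
  - destruct Ht'.
  - destruct Ht' as [_ Happ]. split; auto. intros a Ha. eapply IHB; eauto.
    + apply steps_app; [auto|constructor].
    + split; auto. eapply interp_elem_wl; eauto.
Qed.

Definition denotes (A : term) (X : term -> Prop) : Prop :=
  exists i, interp (univ_below i) i A X.

Lemma denotes_functional A X Y : denotes A X -> denotes A Y -> X = Y.
Proof.
  intros [i Hi] [j Hj]. apply (interp_functional (Nat.max i j) A);
    eapply interp_cumulative; eauto; lia.
Qed.

Lemma denotes_univ i : denotes (Univ i) (univ_set i).
Proof.
  exists (S i). rewrite <- (univ_below_spec (S i) i) by lia.
  apply interp_univ; simpl; auto. constructor.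
Qed.

Definition sem_typed (A t : term) : Prop := exists X, denotes A X /\ X t.

Lemma sem_typed_wl A t : sem_typed A t -> well_labelled D t.
Proof. intros [X [[i HX] Ht]]. eapply interp_elem_wl; eauto. Qed.

Lemma sem_typed_expand A t t' :
  sem_typed A t' -> steps D t t' -> well_labelled D t -> sem_typed A t.
Proof.
  intros [X [[i HX] Ht']] Htt' Hwl. exists X. split; [exists i; auto|].
  eapply interp_elem_expand; eauto.
Qed.

Lemma sem_typed_univ i A : sem_typed (Univ i) A <-> univ_set i A.
Proof.
  split.
  - intros [X [HX HA]]. rewrite (denotes_functional _ _ _ HX (denotes_univ i)) in HA. exact HA.
  - intros HA. exists (univ_set i). split; auto. apply denotes_univ.
Qed.

Lemma sem_typed_app A B f a :
  sem_typed (Pi A B) f -> sem_typed A a -> sem_typed (subst1 a B) (App f a).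
Proof.
  intros [Z [[i HZ] Hf]] [X [HX Ha]].
  destruct (interp_pi_inv _ _ _ _ HZ) as [XA [F [HA [HB ->]]]].
  assert (EXA : XA = X) by (eapply denotes_functional; [exists i|]; eauto). subst X.
  exists (F a). split; [exists i; auto|]. apply (proj2 Hf); auto.
Qed.

Lemma sem_typed_pi_intro A B f Z : denotes (Pi A B) Z -> well_labelled D f ->
  (forall a, sem_typed A a -> sem_typed (subst1 a B) (App f a)) -> Z f.
Proof.
  intros [i HZ] Hf Happ.
  destruct (interp_pi_inv _ _ _ _ HZ) as [XA [F [HA [HB ->]]]].
  split; auto. intros a Ha.
  destruct (Happ a) as [Y [HY HfaY]]; [exists XA; split; [exists i|]; auto|].
  rewrite (denotes_functional _ _ _ (ex_intro _ i (HB a Ha)) HY). exact HfaY.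
Qed.

Lemma not_sem_typed_var_type n t : ~ sem_typed (Var n) t.
Proof.
  intros [X [[i HX] Ht]].
  inversion HX as [? j _ _ HR|? n' _ HR|? A1 B XA F _ HR _ _]; subst;
    apply steps_var in HR; try discriminate. exact Ht.
Qed.

Lemma sem_typed_var_univ i n : sem_typed (Univ i) (Var n).
Proof.
  apply sem_typed_univ. exists (fun _ => False). eapply interp_var; simpl; auto. constructor.
Qed.

(* Instantiating at a type variable, which denotes the empty set. *)
Lemma not_sem_typed_poly i M : ~ sem_typed (Pi (Univ i) (Var 0)) M.
Proof.
  intros HM. apply (not_sem_typed_var_type 0 (App M (Var 0))).
  exact (sem_typed_app _ _ _ _ HM (sem_typed_var_univ i 0)).
Qed.

Definition sem_subst (G : ctx) (sigma : nat -> term) : Prop :=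
  (forall k, well_labelled D (sigma k)) /\
  forall x A, nth_error G x = Some A ->
    sem_typed (subst sigma (ren (fun k => k + S x) A)) (sigma x).

Definition sem_typing (G : ctx) (M A : term) : Prop :=
  forall sigma, sem_subst G sigma -> sem_typed (subst sigma A) (subst sigma M).

Lemma sem_subst_cons G sigma A a :
  sem_subst G sigma -> sem_typed (subst sigma A) a -> sem_subst (A :: G) (scons a sigma).
Proof.
  intros [Hwl HG] Ha. split.
  - intros [|k]; simpl; auto. eapply sem_typed_wl; eauto.
  - intros [|x] B Hx; simpl in Hx.
    + injection Hx as <-. rewrite subst_scons_shift, ren_add_0. exact Ha.
    + rewrite subst_scons_shift. apply HG; auto.
Qed.

Lemma sem_typing_univ G i : sem_typing G (Univ i) (Univ (S i)).
Proof.
  intros sigma _. apply sem_typed_univ. exists (univ_below (S i) i).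
  apply interp_univ; simpl; auto. constructor.
Qed.

Lemma sem_typing_pi G A B i j : well_labelled D B ->
  sem_typing G A (Univ i) -> sem_typing (A :: G) B (Univ j) ->
  sem_typing G (Pi A B) (Univ (Nat.max i j)).
Proof.
  intros HwlB HA HB sigma Hs. apply sem_typed_univ.
  destruct (proj1 (sem_typed_univ _ _) (HA sigma Hs)) as [XA HXA].
  set (F := fun a t => exists Y, interp (univ_below j) j (subst (scons a sigma) B) Y /\ Y t).
  assert (HF : forall a, XA a -> interp (univ_below j) j (subst1 a (subst (up sigma) B)) (F a)).
  { intros a Ha. rewrite subst1_up.
    assert (Hs' : sem_subst (A :: G) (scons a sigma))
      by (apply sem_subst_cons; auto; exists XA; split; [exists i|]; auto).
    destruct (proj1 (sem_typed_univ _ _) (HB _ Hs')) as [Y HY].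
    unfold F. rewrite (interp_elems_eq _ _ _ HY). exact HY. }
  exists (pi_set XA F). apply interp_pi with (subst sigma A) (subst (up sigma) B).
  - split; [eapply interp_wl; eauto|]. apply well_labelled_subst_up; auto. apply Hs.
  - constructor.
  - eapply interp_cumulative; eauto. lia.
  - intros a Ha. eapply interp_cumulative; eauto. lia.
Qed.

Lemma sem_typing_app G M N A B :
  sem_typing G M (Pi A B) -> sem_typing G N A -> sem_typing G (App M N) (subst1 N B).
Proof.
  intros HM HN sigma Hs. rewrite subst_subst1.
  exact (sem_typed_app _ _ _ _ (HM sigma Hs) (HN sigma Hs)).
Qed.

(* The η-rules of [conv] never fire here: a type that denotes something
   cannot reduce to a label. *)
Lemma sem_typing_conv G M A B i : well_labelled D A -> well_labelled D B -> conv D A B ->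
  sem_typing G M A -> sem_typing G B (Univ i) -> sem_typing G M B.
Proof.
  intros HwlA HwlB Hc HM HB sigma Hs.
  destruct (HM sigma Hs) as [X [[k HX] HMX]].
  destruct (proj1 (sem_typed_univ _ _) (HB sigma Hs)) as [Y HY].
  exists X. split; auto. exists k.
  destruct Hc as [A' B' P HAP HBP|A' B' B'' l Ns e HL _ _ _|A' B' B'' l Ns e HL _ _ _].
  - eapply interp_joinable; [exact HX|apply steps_subst; eauto|apply steps_subst; eauto|].
    eapply interp_wl; eauto.
  - exfalso. apply (steps_subst D D_ok _ _ sigma HwlA) in HL.
    exact (interp_not_lab _ _ _ _ _ _ HX HL).
  - exfalso. apply (steps_subst D D_ok _ _ sigma HwlB) in HL.
    exact (interp_not_lab _ _ _ _ _ _ HY HL).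
Qed.

Lemma sem_subst_tele G sigma Ms As :
  sem_subst G sigma -> ctx_ok D (rev As) -> length Ms = length As ->
  Forall (well_labelled D) Ms ->
  (forall k, k < length Ms -> sem_typing G (nth k Ms (Var 0))
     (subst (tele_subst (firstn k Ms)) (nth k As (Var 0)))) ->
  sem_subst (rev As) (tele_subst (map (subst sigma) Ms)).
Proof.
  intros Hs HAs Hlen HwlMs HMs. split.
  - intros k. apply tele_subst_wl, Forall_map. eapply Forall_impl; [|exact HwlMs].
    intros M HM. apply well_labelled_subst; auto. apply Hs.
  - intros x A Hx. destruct (HAs x A Hx) as [_ HAc]. rewrite length_rev in HAc.
    rewrite nth_error_rev in Hx. destruct (Nat.ltb_spec x (length As)) as [Hxn|]; [|discriminate].
    apply (nth_error_nth _ _ (Var 0)) in Hx.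
    rewrite subst_tele_subst_shift; rewrite length_map, Hlen; auto.
    rewrite firstn_map, <- subst_tele_subst
      by (rewrite length_firstn, Hlen, Nat.min_l by lia; exact HAc).
    rewrite tele_subst_map, tele_subst_spec by lia.
    destruct (Nat.ltb_spec x (length Ms)) as [_|]; [|lia].
    rewrite Hlen, <- Hx. apply (HMs (length As - S x) ltac:(lia) sigma Hs).
Qed.

Record sem_entry (e : entry) : Prop := {
  sem_entry_type : forall tau, sem_subst (rev (lparams e)) tau ->
    exists X, denotes (subst tau (Pi (ldom e) (lcod e))) X;
  sem_entry_body : sem_typing (ldom e :: rev (lparams e)) (lbody e) (lcod e) }.

Lemma sem_entry_intro l As A M B i :
  sem_typing (rev As) (Pi A B) (Univ i) -> sem_typing (A :: rev As) M B ->
  sem_entry (mkEntry l As A M B).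
Proof.
  intros HPi HM. split; simpl; auto.
  intros tau Htau. destruct (proj1 (sem_typed_univ _ _) (HPi tau Htau)) as [X HX].
  exists X, i. exact HX.
Qed.

Lemma sem_typing_lab G l Ms e :
  label_in D l e -> length Ms = length (lparams e) -> sem_entry e ->
  Forall (well_labelled D) Ms ->
  (forall k, k < length Ms -> sem_typing G (nth k Ms (Var 0))
     (subst (tele_subst (firstn k Ms)) (nth k (lparams e) (Var 0)))) ->
  sem_typing G (Lab l Ms)
    (Pi (subst (tele_subst Ms) (ldom e)) (subst (up (tele_subst Ms)) (lcod e))).
Proof.
  intros Hl Hlen [Htype Hbody] HwlMs HMs sigma Hs.
  destruct (label_ctx_entries D D_ok e (proj1 Hl)) as [Hparams _ _ _ Hdc Hcc _].
  set (tau := tele_subst (map (subst sigma) Ms)).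
  assert (Htau : sem_subst (rev (lparams e)) tau) by (eapply sem_subst_tele; eauto).
  destruct (Htype tau Htau) as [Z HZ].
  assert (HwlL : well_labelled D (subst sigma (Lab l Ms))).
  { apply well_labelled_subst; [apply Hs|]. apply well_labelled_Lab. eauto. }
  exists Z. split.
  - simpl. rewrite subst_tele_subst, subst_up_tele_subst by (rewrite Hlen; auto). exact HZ.
  - apply (sem_typed_pi_intro _ _ _ _ HZ HwlL). intros a Ha. rewrite subst1_up.
    apply sem_typed_expand with (subst (scons a tau) (lbody e)).
    + apply Hbody, sem_subst_cons; auto.
    + apply steps_one. exact (step_beta D l (map (subst sigma) Ms) a e Hl).
    + split; auto. eapply sem_typed_wl; eauto.
Qed.

Definition sem_label_ctx (D' : label_ctx) : Prop := forall e, In e D' -> sem_entry e.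

Lemma typing_sound :
  (forall D' G, wf D' G -> incl D' D -> sem_label_ctx D') /\
  (forall D' G M A, typing D' G M A -> incl D' D -> sem_label_ctx D' /\ sem_typing G M A).
Proof.
  apply (wf_typing_mut (fun D' G _ => incl D' D -> sem_label_ctx D')
           (fun D' G M A _ => incl D' D -> sem_label_ctx D' /\ sem_typing G M A)).
  - intros _ e [].
  - intros D' As A M B i l _ _ IHPi _ IHM Hi. apply incl_cons_inv in Hi as [_ Hi].
    destruct (IHPi Hi) as [HD' HPi]. intros e [<-|He]; auto.
    apply sem_entry_intro with i; [exact HPi|apply IHM, Hi].
  - intros D' G A i _ IHw _ _ Hi. auto.
  - intros D' G x A _ IHw Hx Hi. split; auto. intros sigma [_ Hs]. apply Hs, Hx.
  - intros D' G i _ IHw Hi. split; auto. apply sem_typing_univ.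
  - intros D' G A B i j _ IHA HB IHB Hi.
    destruct (IHA Hi) as [HD' HA], (IHB Hi) as [_ HB'].
    split; auto. apply sem_typing_pi; auto. apply (typing_wl_incl _ _ _ _ _ HB Hi).
  - intros D' G M N A B _ IHM _ IHN Hi.
    destruct (IHM Hi) as [HD' HM], (IHN Hi) as [_ HN].
    split; auto. eapply sem_typing_app; eauto.
  - intros D' G M A B i HM IHM Hc HB IHB Hi.
    destruct (IHM Hi) as [HD' HM'], (IHB Hi) as [_ HB'].
    split; auto. apply sem_typing_conv with A i; auto.
    + apply (typing_wl_incl _ _ _ _ _ HM Hi).
    + apply (typing_wl_incl _ _ _ _ _ HB Hi).
    + eapply conv_incl; eauto.
  - intros D' G l Ms e _ IHw [He Hn] Hlen HMs IHMs Hi.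
    split; auto. apply sem_typing_lab; auto.
    + split; auto.
    + apply IHw; auto.
    + apply Forall_of_nth. intros k Hk. apply (typing_wl_incl _ _ _ _ _ (HMs k Hk) Hi).
    + intros k Hk. apply (IHMs k Hk Hi).
Qed.

End Model.

Theorem theorem3p24 :
  ~ (exists (D : label_ctx) (i : nat) (M : term),
       typing D nil M (Pi (Univ i) (Var 0))).
Proof.
  intros [D [i [M HM]]].
  pose proof (typing_label_ctx_ok _ _ _ _ (proj2 typing_syntax _ _ _ _ HM)) as D_ok.
  destruct (proj2 (typing_sound D D_ok) _ _ _ _ HM (incl_refl D)) as [_ Hsound].
  assert (Hid : sem_subst D nil Var) by (split; [simpl; auto|intros [|x] A Hx; discriminate]).
  apply (not_sem_typed_poly D D_ok i M).
  rewrite <- (subst_Var M). exact (Hsound Var Hid).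
Qed.
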